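(* Let $S\in\mathbb{S}^d_m$, $G\in\mathcal{M}(S)$, and let $F$ be a closed set in $\mathbb{R}^d$. Then $F\subset G$ if and only if $\psi_F\le\psi_G$.
   Context: $\mathbb{S}^d_m$: symmetric invertible $d\times d$ real matrices with exactly $m$ positive eigenvalues; $S(x,y):=\langle x,Sy\rangle$. $G$ is $S$-monotone if $S(x-y,x-y)\ge0$ for $x,y\in G$; maximal if not a strict subset of another $S$-monotone set; $\mathcal{M}(S)$ = family of maximal $S$-monotone sets. For a set $F$, $\psi_F(y):=\sup_{x\in F}(S(x,y)-\frac12S(x,x))$, $y\in\mathbb{R}^d$. *)

From HB Require Import structures.
From mathcomp Require Import all_boot all_order all_algebra.
From mathcomp Require Import all_classical all_reals all_analysis.
Set Implicit Arguments. Unset Strict Implicit. Unset Printing Implicit Defensive.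
Import Order.TTheory GRing.Theory Num.Theory.
Import numFieldNormedType.Exports.
Local Open Scope ring_scope.
Local Open Scope classical_set_scope.

Definition Sform (R : realType) (d : nat) (S : 'M[R]_d) (x y : 'rV[R]_d) : R :=
  (x *m (S *m y^T)) 0 0.

(* \mathbb{S}^d_m : symmetric invertible matrices with exactly m positive
   eigenvalues (counted with multiplicity, i.e. as roots of the
   characteristic polynomial). *)
Definition in_Sdm (R : realType) (d m : nat) (S : 'M[R]_d) : Prop :=
  S^T = S /\ S \in unitmx /\
  exists lam : 'I_d -> R,
    char_poly S = \prod_(i < d) ('X - (lam i)%:P) /\
    #|[set i | 0 < lam i]| = m.

Definition S_monotone (R : realType) (d : nat) (S : 'M[R]_d)
  (G : set 'rV[R]_d) : Prop :=
  forall x y, G x -> G y -> 0 <= Sform S (x - y) (x - y).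

Definition maximal_S_monotone (R : realType) (d : nat) (S : 'M[R]_d)
  (G : set 'rV[R]_d) : Prop :=
  S_monotone S G /\
  forall H : set 'rV[R]_d, S_monotone S H -> G `<=` H -> H = G.

Definition psi (R : realType) (d : nat) (S : 'M[R]_d) (F : set 'rV[R]_d)
  (y : 'rV[R]_d) : \bar R :=
  ereal_sup [set (Sform S x y - Sform S x x / 2)%:E | x in F].

From HB Require Import structures.
From mathcomp Require Import all_boot all_order all_algebra.
From mathcomp Require Import all_classical all_reals all_analysis.
From mathcomp Require Import ring.

Set Implicit Arguments.
Unset Strict Implicit.
Unset Printing Implicit Defensive.
Import Order.TTheory GRing.Theory Num.Theory.
Import numFieldNormedType.Exports.
Local Open Scope ring_scope.
Local Open Scope classical_set_scope.

(* For symmetric S, the affine minorant x |-> S(x,g) - S(x,x)/2 falls short of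
   S(g,g)/2 by exactly S(x-g,x-g)/2.  Hence on an S-monotone set G the supremum
   psi_G(g) at g in G is at most S(g,g)/2, so psi_F <= psi_G evaluated at g
   forces S(y-g,y-g) >= 0 for every y in F and g in G: G u {y} is S-monotone,
   and maximality of G puts y in G. *)

Section Sform.
Variables (R : realType) (d : nat) (S : 'M[R]_d).

Lemma SformBl x x' y : Sform S (x - x') y = Sform S x y - Sform S x' y.
Proof. by rewrite /Sform mulmxBl !mxE. Qed.

Lemma SformBr x y y' : Sform S x (y - y') = Sform S x y - Sform S x y'.
Proof. by rewrite /Sform linearB /= !mulmxBr !mxE. Qed.

Lemma Sform00 : Sform S 0 0 = 0.
Proof. by rewrite /Sform mul0mx mxE. Qed.

Lemma SformBB_sym x y : Sform S (y - x) (y - x) = Sform S (x - y) (x - y).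
Proof. by rewrite !(SformBl, SformBr); ring. Qed.

Hypothesis symS : S^T = S.

Lemma SformC x y : Sform S x y = Sform S y x.
Proof.
rewrite /Sform -[in LHS](trmxK (x *m _)) mxE.
by rewrite !trmx_mul trmxK symS mulmxA.
Qed.

Lemma Sform_half_gap x g :
  Sform S g g / 2 - (Sform S x g - Sform S x x / 2) = Sform S (x - g) (x - g) / 2.
Proof. by rewrite !(SformBl, SformBr) (SformC g x); field. Qed.

End Sform.

Section Psi.
Variables (R : realType) (d : nat) (S : 'M[R]_d).

Lemma psi_ubound (F : set 'rV[R]_d) x y :
  F x -> ((Sform S x y - Sform S x x / 2)%:E <= psi S F y)%E.
Proof. by move=> Fx; apply: ereal_sup_ubound; exists x. Qed.

Lemma psi_subset (F G : set 'rV[R]_d) y : F `<=` G -> (psi S F y <= psi S G y)%E.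
Proof. by move=> FG; apply: ereal_sup_le => _ [x Fx <-]; exists x => //; apply: FG. Qed.

Lemma psi_S_monotone_le (G : set 'rV[R]_d) g :
  S^T = S -> S_monotone S G -> G g -> (psi S G g <= (Sform S g g / 2)%:E)%E.
Proof.
move=> symS monG Gg; apply: ge_ereal_sup => _ [x Gx <-].
rewrite lee_fin -subr_ge0 Sform_half_gap //.
by rewrite divr_ge0 ?monG.
Qed.

End Psi.

Lemma S_monotone_setU1 (R : realType) (d : nat) (S : 'M[R]_d)
    (G : set 'rV[R]_d) y :
  S_monotone S G -> (forall g, G g -> 0 <= Sform S (y - g) (y - g)) ->
  S_monotone S (y |` G).
Proof.
move=> monG yG a b [->|Ga] [->|Gb].
- by rewrite subrr Sform00.
- exact: yG.
- by rewrite SformBB_sym yG.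
- exact: monG.
Qed.

Lemma maximal_S_monotone_mem (R : realType) (d : nat) (S : 'M[R]_d)
    (G : set 'rV[R]_d) y :
  maximal_S_monotone S G -> (forall g, G g -> 0 <= Sform S (y - g) (y - g)) ->
  G y.
Proof.
move=> [monG maxG] yG.
by rewrite -(maxG _ (S_monotone_setU1 monG yG) (@subsetUr _ [set y] G)); left.
Qed.

Theorem lemma12 (R : realType) (d m : nat) (S : 'M[R]_d)
  (G F : set 'rV[R]_d) :
  in_Sdm m S -> maximal_S_monotone S G -> closed F ->
  (F `<=` G <-> (forall y : 'rV[R]_d, (psi S F y <= psi S G y)%E)).
Proof.
move=> [symS _] maxG _; split=> [FG y|psiFG y Fy]; first exact: psi_subset.
apply: (maximal_S_monotone_mem maxG) => g Gg.
have := le_trans (psi_ubound S g Fy)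
  (le_trans (psiFG g) (psi_S_monotone_le symS maxG.1 Gg)).
by rewrite lee_fin -subr_ge0 Sform_half_gap // pmulr_lge0.
Qed.
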